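(* Let $X,Y\in M_n(\mathbb{C})$ be such that $[X,Y]=XY-YX$ is diagonal but nonzero. Consider the $n\times 2n$ matrix whose first $n$ columns are the diagonals of $X^0,X^1,\dots,X^{n-1}$ and whose last $n$ columns are the diagonals of $Y^0,Y^1,\dots,Y^{n-1}$. Then this matrix has rank at most $n-1$; in particular all of its $n\times n$ minors vanish.
   Context: For a matrix $Z\in M_n(\mathbb{C})$, its diagonal is the column vector $(Z_{11},\dots,Z_{nn})^T$; $X^0=Y^0=I$. *)

(* The complex numbers C are modelled as R[i] = complex R
   for R : realType (a complete archimedean ordered field, i.e. the reals). *)
From HB Require Import structures.
From mathcomp Require Import all_boot all_order all_algebra.
From mathcomp Require Import complex.
From mathcomp Require Import reals.
Set Implicit Arguments. Unset Strict Implicit. Unset Printing Implicit Defensive.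
Import Order.TTheory GRing.Theory Num.Theory.
Local Open Scope ring_scope.
Local Open Scope complex_scope.

Definition diag_col (F : pzRingType) (n : nat) (Z : 'M[F]_n) : 'cV[F]_n :=
  \col_i Z i i.

Definition powdiag_mx (F : pzRingType) (n : nat) (X Y : 'M[F]_n) : 'M[F]_(n, n + n) :=
  row_mx (\matrix_(i < n, j < n) diag_col (X ^+ j) i 0)
         (\matrix_(i < n, j < n) diag_col (Y ^+ j) i 0).

From HB Require Import structures.
From mathcomp Require Import all_boot all_order all_algebra.
From mathcomp Require Import complex.
From mathcomp Require Import reals.
Import Order.TTheory GRing.Theory Num.Theory.
Local Open Scope ring_scope.
Local Open Scope complex_scope.

(* Writing D = [X,Y], both D X^k = X (Y X^k) - (Y X^k) X and
   D Y^k = (X Y^k) Y - Y (X Y^k) are commutators, hence traceless.  When D is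
   diagonal, tr (D A) only sees the diagonal of A, so the row vector of
   diagonal entries of D annihilates every column of powdiag_mx X Y from the
   left.  A nonzero D gives a nonzero left kernel vector, which forces the rank
   below n and kills every n x n minor. *)

Section TracelessCommutator.

Variables (R : comPzRingType) (n : nat) (X Y : 'M[R]_n).

Lemma mxtrace_commutator (A B : 'M[R]_n) : \tr (A *m B - B *m A) = 0.
Proof. by rewrite raddfB /= mxtrace_mulC subrr. Qed.

Lemma mxtrace_commutator_mulXn k : \tr ((X * Y - Y * X) *m X ^+ k) = 0.
Proof.
have -> : (X * Y - Y * X) *m X ^+ k = X *m (Y *m X ^+ k) - (Y *m X ^+ k) *m X.
  by rewrite mulmxBl !mulmxE !mulrA -!mulrA (commrX k (commr_refl X)).
exact: mxtrace_commutator.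
Qed.

Lemma mxtrace_commutator_mulYn k : \tr ((X * Y - Y * X) *m Y ^+ k) = 0.
Proof.
have -> : (X * Y - Y * X) *m Y ^+ k = (X *m Y ^+ k) *m Y - Y *m (X *m Y ^+ k).
  by rewrite mulmxBl !mulmxE !mulrA -!mulrA (commrX k (commr_refl Y)).
exact: mxtrace_commutator.
Qed.

End TracelessCommutator.

Lemma mxtrace_diag_mulmx (R : pzRingType) n (D A : 'M[R]_n) :
  is_diag_mx D -> \tr (D *m A) = \sum_i D i i * A i i.
Proof.
move=> /is_diag_mxP Ddiag; apply: eq_bigr => i _.
rewrite mxE (bigD1 i) //= big1 ?addr0 // => l li.
by rewrite Ddiag ?mul0r // eq_sym.
Qed.

Lemma diag_row_mulmx_powdiag_mx (R : comPzRingType) n (X Y : 'M[R]_n) :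
  is_diag_mx (X * Y - Y * X) ->
  (diag_col (X * Y - Y * X))^T *m powdiag_mx X Y = 0.
Proof.
move=> Ddiag; apply/matrixP => i j; rewrite !mxE.
case: (splitP j) => k jk.
- have -> : j = lshift n k by apply/val_inj.
  rewrite -[RHS](mxtrace_commutator_mulXn _ _ X Y k) mxtrace_diag_mulmx //.
  by apply: eq_bigr => l _; rewrite /powdiag_mx row_mxEl !mxE.
- have -> : j = rshift n k by apply/val_inj.
  rewrite -[RHS](mxtrace_commutator_mulYn _ _ X Y k) mxtrace_diag_mulmx //.
  by apply: eq_bigr => l _; rewrite /powdiag_mx row_mxEr !mxE.
Qed.

Lemma diag_col_eq0 (R : pzRingType) n (D : 'M[R]_n) :
  is_diag_mx D -> (diag_col D == 0) = (D == 0).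
Proof.
move=> /is_diag_mxP Ddiag; apply/eqP/eqP => [D0|->]; last first.
  by apply/matrixP => i j; rewrite !mxE.
apply/matrixP => i j; have [<-|ij] := eqVneq i j; last by rewrite Ddiag // mxE.
by move/matrixP: D0 => /(_ i 0); rewrite !mxE.
Qed.

Lemma rank_leq_pred_of_left_kernel (F : fieldType) m p (A : 'M[F]_(m, p))
    (v : 'rV[F]_m) :
  v != 0 -> v *m A = 0 -> (\rank A <= m.-1)%N.
Proof.
move=> v_neq0 vA0; have A_not_free : ~~ row_free A.
  by apply: contra v_neq0 => /mulmx_free_eq0 <-; rewrite vA0.
move: A_not_free (rank_leq_row A); rewrite /row_free leq_eqVlt => /negbTE -> /=.
by move=> rk_lt; rewrite -ltnS (leq_trans rk_lt (leqSpred m)).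
Qed.

Lemma det_colsub_eq0_of_left_kernel (F : fieldType) m p
    (A : 'M[F]_(m, p)) (v : 'rV[F]_m) (f : 'I_m -> 'I_p) :
  v != 0 -> v *m A = 0 -> \det (colsub f A) = 0.
Proof.
move=> v_neq0 vA0; apply/eqP/det0P; exists v => //.
by rewrite mulmx_colsub vA0; apply/matrixP => i j; rewrite !mxE.
Qed.

Theorem mainTheorem11 (R : realType) (n : nat) (X Y : 'M[R[i]]_n) :
  is_diag_mx (X * Y - Y * X) -> X * Y - Y * X != 0 ->
  (\rank (powdiag_mx X Y) <= n.-1)%N /\
  (forall f : 'I_n -> 'I_(n + n), \det (colsub f (powdiag_mx X Y)) = 0).
Proof.
move=> Ddiag D_neq0.
set v := (diag_col (X * Y - Y * X))^T.
have v_neq0 : v != 0 by rewrite trmx_eq0 diag_col_eq0.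
have vA0 : v *m powdiag_mx X Y = 0 by exact: diag_row_mulmx_powdiag_mx.
split; first exact: rank_leq_pred_of_left_kernel v_neq0 vA0.
by move=> f; apply: det_colsub_eq0_of_left_kernel v_neq0 vA0.
Qed.
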